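(* Let $\mathcal{C}$ be a binary linear LRC code of length $n$, locality $r$ and minimum distance $d$. Then $$\dim(\mathcal{C})\le\min_{1\le s\le n/(r+1)}\big(sr+\log_2M(n-s(r+1),d,r)\big),$$ where $M(m,d,r)$ is the maximum cardinality of a binary linear LRC code of length $m$, minimum distance $d$ and locality $r$. Consequently, $$R^{(\mathrm{lin})}(r,\delta)\le\min_{0\le\sigma<1/(r+1)}\Big\{\sigma r+(1-\sigma(r+1))\,R^{(\mathrm{lin})}\Big(r,\frac{\delta}{1-\sigma(r+1)}\Big)\Big\}.$$
   Context: A binary code $\mathcal{C}\subseteq\{0,1\}^n$ is an LRC code with locality $r$ if every coordinate $i\in[n]$ is contained in a subset $\mathcal{R}_i\subseteq[n]$ of size $r+1$ such that for some function $\phi_i:\{0,1\}^r\to\{0,1\}$, $c_i=\phi_i(c_{j_1},\dots,c_{j_r})$ for every codeword $c$, where $j_1<\dots<j_r$ are the elements of $\mathcal{R}_i\setminus\{i\}$. Let $M^{(\mathrm{lin})}(n,r,d)$ be the maximum cardinality of a binary linear code of length $n$, minimum Hamming distance $d$ and locality $r$, and $R^{(\mathrm{lin})}(r,\delta)=\limsup_{n\to\infty}\frac1n\log_2M^{(\mathrm{lin})}(n,r,\delta n)$. *)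

From HB Require Import structures.
From mathcomp Require Import all_boot all_order all_algebra.
From mathcomp Require Import all_classical all_reals all_analysis.
Set Implicit Arguments. Unset Strict Implicit. Unset Printing Implicit Defensive.
Import Order.TTheory GRing.Theory Num.Theory.
Local Open Scope ring_scope.

Notation word n := 'rV['F_2]_n.

Definition hamming n (x y : word n) : nat := #|[set i : 'I_n | x 0 i != y 0 i]|.

Definition is_linear_code n (C : {set word n}) : bool :=
  (0 \in C) && [forall x in C, forall y in C, forall a : 'F_2, (a *: x + y) \in C].

Definition code_dim n (C : {set word n}) : nat := \dim (<<enum C>>%VS).

Definition min_dist_ge (R : realType) n (C : {set word n}) (t : R) : bool :=
  [forall x in C, forall y in C, (x != y) ==> (t <= (hamming x y)%:R)].

(* Locality r: every coordinate i lies in a recovery set R_i (of size at most r+1) such that c_i = phi_i (c_{j_1}, ..., c_{j_k}) for all codewords c,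
   where j_1 < ... < j_k enumerate R_i \ {i} (enum on ordinals is increasing). *)
Definition has_locality n (C : {set word n}) (r : nat) : Prop :=
  forall i : 'I_n, exists (Ri : {set 'I_n}) (phi : seq 'F_2 -> 'F_2),
    [/\ i \in Ri, (#|Ri| <= r.+1)%N &
        forall c, c \in C -> c 0 i = phi [seq c 0 j | j <- enum (Ri :\ i)]].

Definition Mlin (R : realType) (n r : nat) (t : R) : nat :=
  \max_(C : {set word n} |
          `[< is_linear_code C /\ has_locality C r /\ min_dist_ge C t >]) #|C|.

Definition log2 (R : realType) (x : R) : R := ln x / ln 2.

Definition Rlin (R : realType) (r : nat) (delta : R) : \bar R :=
  limn_esup (fun n : nat => (log2 (Mlin n r (delta * n%:R))%:R / n%:R)%:E).

From HB Require Import structures.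
From mathcomp Require Import all_boot all_order all_algebra all_field.
From mathcomp Require Import all_classical all_reals all_analysis.
From mathcomp Require Import zify lra.
Import Order.TTheory GRing.Theory Num.Theory.
Set Implicit Arguments. Unset Strict Implicit. Unset Printing Implicit Defensive.
Local Open Scope ring_scope.

(* Repeatedly choosing a coordinate outside the current set S and adding its
   recovery set enlarges S by at most r+1 coordinates, of which the chosen one is
   a function of the others on the code.  After s steps, and padding, S has
   s(r+1) coordinates whose values on a linear LRC code C are determined by a set
   K of at most sr of them.  Two codewords with the same restriction to K differ
   by a codeword vanishing on S, and deleting S from the subcode vanishing on S
   leaves a linear LRC code of length n - s(r+1) with the same locality and
   distance; hence |C| <= 2^(sr) M(n - s(r+1)), the first claim in logarithmic
   form.  For the rate bound take s = floor(sigma n) + 1: the shortened length m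
   is about (1 - sigma(r+1)) n, so the distance delta n is at least
   (delta / (1 - sigma(r+1))) m, and dividing by n compares the upper limits. *)

Lemma card_le_fibers (V : finZmodType) (K : finType) (f : V -> K) (A B : {set V}) :
  {in A &, forall x y, f x = f y -> x - y \in B} -> (#|A| <= #|K| * #|B|)%N.
Proof.
move=> fAB; rewrite -sum1_card (partition_big f predT) //= -sum_nat_const.
apply: leq_sum => k _; rewrite sum1_card.
case: (pickP [pred x in A | f x == k]) => [x0 /andP[x0A /eqP fx0] | noA]; last first.
  by rewrite (eq_card0 noA).
rewrite -(card_imset _ (addIr (- x0))); apply/subset_leq_card/fintype.subsetP.
by move=> _ /imsetP[x /andP[xA /eqP fx] ->]; rewrite fAB // fx fx0.
Qed.

Lemma exists_notin (T : finType) (A : {set T}) : (#|A| < #|T|)%N -> exists x, x \notin A.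
Proof.
move=> AT; have /card_gt0P[x] : (0 < #|~: A|)%N by have := cardsC A; lia.
by rewrite inE; exists x.
Qed.

Lemma natr_gt_eventually (R : archiRealFieldType) (a b : R) : 0 < b ->
  exists N, forall n, (N <= n)%N -> a < b * n%:R.
Proof.
move=> b0; exists (Num.truncn (b^-1 * a)).+1 => n aN.
by rewrite -ltr_pdivrMl //; apply: lt_le_trans (truncnS_gt _) _; rewrite ler_nat.
Qed.

Section Log2.
Variable R : realType.
Implicit Types x y : R.

Lemma ln2_gt0 : 0 < ln (2 : R).
Proof. by rewrite ln_gt0 // ltr1n. Qed.

Lemma ler_log2 x y : 0 < x -> x <= y -> log2 x <= log2 y.
Proof.
move=> x0 xy; rewrite ler_pM2r ?invr_gt0 ?ln2_gt0 // ler_ln ?posrE //.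
exact: lt_le_trans xy.
Qed.

Lemma log2M x y : 0 < x -> 0 < y -> log2 (x * y) = log2 x + log2 y.
Proof. by move=> x0 y0; rewrite /log2 lnM ?posrE // mulrDl. Qed.

Lemma log2_pow2 k : log2 (2 ^+ k : R) = k%:R.
Proof. by rewrite /log2 lnXn // mulrnAl divff // gt_eqF // ln2_gt0. Qed.

Lemma log2_ge0 x : 1 <= x -> 0 <= log2 x.
Proof. by move=> x1; apply: divr_ge0; [exact: ln_ge0 | exact/ltW/ln2_gt0]. Qed.

End Log2.

Section UpperLimits.
Variable R : realType.
Local Open Scope ereal_scope.

Lemma limn_esup_lt_eventually (u : (\bar R)^nat) x :
  limn_esup u < x -> exists N, forall n, (N <= n)%N -> u n < x.
Proof.
rewrite /limn_esup limf_esupE => /ereal_inf_lt[_ [V [N _ NV] <-] supV_x].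
exists N => n Nn; apply: le_lt_trans supV_x; apply: ereal_sup_ubound.
by exists n => //; exact: NV.
Qed.

Lemma limn_esup_le_eventually (u : (\bar R)^nat) x N :
  (forall n, (N <= n)%N -> u n <= x) -> limn_esup u <= x.
Proof.
move=> ux; rewrite /limn_esup limf_esupE; apply: le_trans (ereal_inf_lbound _) _.
  by exists (fun n => (N <= n)%N) => //; exists N.
by apply: ge_ereal_sup => _ [n Nn <-]; exact: ux.
Qed.

End UpperLimits.

Section LinearCodes.
Variable n : nat.
Implicit Types (C : {set word n}) (K S : {set 'I_n}).

Lemma linear_code0 C : is_linear_code C -> 0 \in C.
Proof. by case/andP. Qed.

Lemma linear_codeZD C a x y :
  is_linear_code C -> x \in C -> y \in C -> a *: x + y \in C.
Proof.
case/andP=> _ /forall_inP linC xC yC.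
exact: (forallP (forall_inP (linC x xC) y yC) a).
Qed.

Lemma linear_codeB C x y : is_linear_code C -> x \in C -> y \in C -> x - y \in C.
Proof.
move=> linC xC yC; have NyC := linear_codeZD (-1) linC yC (linear_code0 linC).
by have := linear_codeZD 1 linC xC NyC; rewrite scale1r scaleN1r addr0.
Qed.

Lemma card_linear_code C : is_linear_code C -> #|C| = (2 ^ code_dim C)%N.
Proof.
move=> linC; have -> : (2 ^ code_dim C)%N = #|<<enum C>>%VS| by rewrite card_vspace card_Fp.
apply: eq_card => x; apply/idP/idP => [xC | /coord_span ->].
  by apply: memv_span; rewrite mem_enum.
apply: (big_ind (fun v => v \in C)) => [|u v uC vC|i _]; first exact: linear_code0.
  by rewrite -[u]scale1r linear_codeZD.
by rewrite -[_ *: _]addr0 linear_codeZD ?linear_code0 // -mem_enum mem_nth ?size_tuple.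
Qed.

Definition determines C K S : Prop :=
  {in C &, forall c c' : word n, {in K, c 0 =1 c' 0} -> {in S, c 0 =1 c' 0}}.

Lemma has_localityP C r :
  has_locality C r <->
  forall i : 'I_n, exists Ri : {set 'I_n},
    [/\ i \in Ri, (#|Ri| <= r.+1)%N & determines C (Ri :\ i) [set i]].
Proof.
split=> loc i.
  have [Ri [phi [iRi RiR phiP]]] := loc i; exists Ri; split=> // c c' cC c'C agree _ /set1P->.
  rewrite (phiP c cC) (phiP c' c'C).
  by congr phi; apply/eq_in_map => j; rewrite mem_enum => /agree.
have [Ri [iRi RiR detRi]] := loc i.
pose proj (c : word n) := [seq c 0 j | j <- enum (Ri :\ i)].
exists Ri, (fun l => if [pick c in C | proj c == l] is Some c then c 0 i else 0).
split=> // c cC; case: pickP => [c' /andP[c'C /eqP proj_c'] | /(_ c)]; last first.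
  by rewrite cC eqxx.
apply: detRi (set11 i) => // j jRi; apply/esym.
by move/eq_in_map: proj_c'; apply; rewrite mem_enum.
Qed.

Lemma determinesU1 C K S x : determines C K S -> determines C (x |: K) (x |: S).
Proof.
move=> detKS c c' cC c'C agree j /setU1P[-> | jS]; first by rewrite agree ?setU11.
by apply: detKS jS => // k kK; rewrite agree // setU1r.
Qed.

Lemma determines_pad C K S k : determines C K S -> (#|S| + k <= n)%N ->
  exists S' K', [/\ #|S'| = (#|S| + k)%N, (#|K'| <= #|K| + k)%N & determines C K' S'].
Proof.
elim: k K S => [|k IHk] K S detKS Sk; first by exists S, K; rewrite !addn0.
have [x xS] : exists x, x \notin S by apply: exists_notin; rewrite card_ord; lia.
have [|S' [K' [cardS' cardK' detK'S']]] := IHk _ _ (determinesU1 (x := x) detKS).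
  by rewrite cardsU1 xS addSn -addnS.
exists S', K'; split=> //; first by rewrite cardS' cardsU1 xS addSnnS.
by apply: leq_trans cardK' _; rewrite cardsU1 addnS -addSn leq_add2r; case: (x \in K).
Qed.

Lemma determines_recovery C K S i Ri :
  determines C K S -> determines C (Ri :\ i) [set i] ->
  determines C (K :|: (Ri :\: S :\ i)) (S :|: Ri).
Proof.
move=> detKS detRi c c' cC c'C agree.
have agreeS : {in S, c 0 =1 c' 0}.
  by apply: detKS => // k kK; rewrite agree // inE kK.
have agreeRi_i : {in Ri :\ i, c 0 =1 c' 0}.
  move=> j /setD1P[ji jRi]; have [/agreeS // | jS] := boolP (j \in S).
  by rewrite agree // !inE ji jS jRi orbT.
move=> j /setUP[/agreeS // | jRi]; have [-> | ji] := eqVneq j i.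
  exact: detRi (set11 i).
by apply: agreeRi_i; rewrite !inE ji.
Qed.

Lemma exists_determining_set C r j : has_locality C r -> (j * r.+1 <= n)%N ->
  exists S K, [/\ #|S| = (j * r.+1)%N, (#|K| <= j * r)%N & determines C K S].
Proof.
move=> /has_localityP loc; elim: j => [|j IHj] jn.
  by exists finset.set0, finset.set0; rewrite !cards0; split=> // c c' _ _ _ k; rewrite inE.
rewrite mulSn in jn; have [|S [K [cardS cardK detKS]]] := IHj; first lia.
have [i iS] : exists i, i \notin S by apply: exists_notin; rewrite card_ord; lia.
have [Ri [iRi cardRi detRi]] := loc i.
have cardS1 : #|S :|: Ri| = (#|S| + #|Ri :\: S|)%N.
  by rewrite cardsU cardsD finset.setIC; have := subset_leq_card (subsetIl Ri S); lia.
have cardK1 : (#|K :|: (Ri :\: S :\ i)| < #|K| + #|Ri :\: S|)%N.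
  rewrite (cardsD1 i (Ri :\: S)) inE iS iRi addnS ltnS.
  by have := leq_card_setU K (Ri :\: S :\ i); case.
have cardRiS : (#|Ri :\: S| <= r.+1)%N.
  by apply: leq_trans cardRi; rewrite subset_leq_card ?subsetDl.
have [|S2 [K2 [cardS2 cardK2 detK2S2]]] :=
  determines_pad (k := (j.+1 * r.+1 - #|S :|: Ri|)%N) (determines_recovery detKS detRi).
  by rewrite mulSn; lia.
by exists S2, K2; split=> //; rewrite ?mulSn ?mulnS in cardS2 cardK2 *; lia.
Qed.

End LinearCodes.

Section Shortening.
Variables (n : nat) (S : {set 'I_n}).
Implicit Types (C : {set word n}) (x y : word n) (j : 'I_n).
Local Notation vanishes c := {in S, forall j, c 0 j = 0}.

Definition vanishing_subcode C := [set c in C | [forall j in S, c 0 j == 0]].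

Lemma vanishing_subcodeP C c : reflect (c \in C /\ vanishes c) (c \in vanishing_subcode C).
Proof.
rewrite inE; apply: (iffP andP) => [[cC /forall_inP c0] | [cC c0]].
  by split=> // j /c0 /eqP.
by split=> //; apply/forall_inP => j /c0 ->.
Qed.

Lemma linear_vanishing_subcode C : is_linear_code C -> is_linear_code (vanishing_subcode C).
Proof.
move=> linC; apply/andP; split.
  by apply/vanishing_subcodeP; split=> [|j _]; rewrite ?linear_code0 ?mxE.
apply/forall_inP => x /vanishing_subcodeP[xC x0].
apply/forall_inP => y /vanishing_subcodeP[yC y0].
apply/forallP => a; apply/vanishing_subcodeP; split; first exact: linear_codeZD.
by move=> j jS; rewrite !mxE x0 // y0 // mulr0 addr0.
Qed.

Definition puncture x : word #|~: S| := \row_k x 0 (enum_val k).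

Lemma punctureZD a x y : puncture (a *: x + y) = a *: puncture x + puncture y.
Proof. by apply/rowP => k; rewrite !mxE. Qed.

Lemma puncture0 : puncture 0 = 0.
Proof. by apply/rowP => k; rewrite !mxE. Qed.

Lemma enum_val_onto j : j \notin S -> exists k : 'I_#|~: S|, enum_val k = j.
Proof.
move=> jS; have jCS : j \in ~: S by rewrite inE.
by exists (enum_rank_in jCS j); rewrite enum_rankK_in.
Qed.

Lemma puncture_agree x y j : vanishes x -> vanishes y ->
  (forall k, enum_val k = j -> puncture x 0 k = puncture y 0 k) -> x 0 j = y 0 j.
Proof.
move=> x0 y0 xy; have [jS | /enum_val_onto[k kj]] := boolP (j \in S).
  by rewrite x0 // y0.
by have := xy k kj; rewrite !mxE kj.
Qed.

Lemma puncture_inj x y : vanishes x -> vanishes y -> puncture x = puncture y -> x = y.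
Proof. by move=> x0 y0 pxy; apply/rowP => j; apply: puncture_agree => // k _; rewrite pxy. Qed.

Lemma hamming_le_puncture x y : vanishes x -> vanishes y ->
  (hamming x y <= hamming (puncture x) (puncture y))%N.
Proof.
move=> x0 y0; apply: leq_trans (leq_imset_card enum_val _).
apply/subset_leq_card/fintype.subsetP => j; rewrite inE => xyj.
have /enum_val_onto[k kj] : j \notin S by apply: contra xyj => jS; rewrite x0 // y0.
by apply/imsetP; exists k; rewrite // inE !mxE kj.
Qed.

Definition shortened C := puncture @: vanishing_subcode C.

Lemma card_shortened C : #|shortened C| = #|vanishing_subcode C|.
Proof.
apply: card_in_imset => x y /vanishing_subcodeP[_ x0] /vanishing_subcodeP[_ y0].
exact: puncture_inj.
Qed.

Lemma linear_shortened C : is_linear_code C -> is_linear_code (shortened C).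
Proof.
move/linear_vanishing_subcode => linD; apply/andP; split.
  by apply/imsetP; exists 0; rewrite ?puncture0 ?linear_code0.
apply/forall_inP => _ /imsetP[x xD ->]; apply/forall_inP => _ /imsetP[y yD ->].
by apply/forallP => a; rewrite -punctureZD imset_f // linear_codeZD.
Qed.

Lemma has_locality_shortened C r : has_locality C r -> has_locality (shortened C) r.
Proof.
move=> /has_localityP locC; apply/has_localityP => k.
have [Ri [kRi cardRi detRi]] := locC (enum_val k).
exists [set k' | enum_val k' \in Ri]; split; first by rewrite inE.
  rewrite -(card_imset _ enum_val_inj); apply/leq_trans/cardRi/subset_leq_card.
  by apply/fintype.subsetP => _ /imsetP[k' + ->]; rewrite inE.
move=> _ _ /imsetP[x /vanishing_subcodeP[xC x0] ->] /imsetP[y /vanishing_subcodeP[yC y0] ->].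
move=> agree _ /set1P->.
rewrite !mxE; apply: detRi (set11 _) => // j /setD1P[jk jRi].
apply: (puncture_agree x0 y0) => k' k'j; rewrite agree // !inE k'j jRi andbT.
by apply: contra jk => /eqP <-; rewrite k'j.
Qed.

Lemma min_dist_ge_shortened (R : realType) C (t : R) :
  min_dist_ge C t -> min_dist_ge (shortened C) t.
Proof.
move=> distC; apply/forall_inP => _ /imsetP[x /vanishing_subcodeP[xC x0] ->].
apply/forall_inP => _ /imsetP[y /vanishing_subcodeP[yC y0] ->]; apply/implyP => pxy.
have xy : x != y by apply: contra pxy => /eqP->.
apply: le_trans (implyP (forall_inP (forall_inP distC x xC) y yC) xy) _.
by rewrite ler_nat hamming_le_puncture.
Qed.

End Shortening.

Section MaximalCodes.
Variables (R : realType) (r : nat).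
Implicit Types (t : R).

Lemma card_le_Mlin m (C : {set word m}) t :
  is_linear_code C -> has_locality C r -> min_dist_ge C t -> (#|C| <= Mlin m r t)%N.
Proof. by move=> linC locC distC; apply: leq_bigmax_cond; apply/asboolP. Qed.

Lemma Mlin_gt0 m t : (0 < Mlin m r t)%N.
Proof.
apply: (@leq_trans #|[set 0 : word m]|); first by rewrite cards1.
apply: card_le_Mlin.
- apply/andP; split; first exact: set11.
  apply/forall_inP => _ /set1P->; apply/forall_inP => _ /set1P->.
  by apply/forallP => a; rewrite scaler0 addr0 set11.
- apply/has_localityP => i; exists [set i]; split; rewrite ?set11 ?cards1 //.
  by move=> _ _ /set1P-> /set1P->.
- by apply/forall_inP => _ /set1P->; apply/forall_inP => _ /set1P->; rewrite eqxx.
Qed.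

Lemma card_vanishing_subcode_le_Mlin n (C : {set word n}) S t :
  is_linear_code C -> has_locality C r -> min_dist_ge C t ->
  (#|vanishing_subcode S C| <= Mlin #|~: S| r t)%N.
Proof.
move=> linC locC distC; rewrite -card_shortened; apply: card_le_Mlin.
- exact: linear_shortened.
- exact: has_locality_shortened.
- exact: min_dist_ge_shortened.
Qed.

(* The case [t2 <= 0] serves negative [delta], where the distance constraint is void. *)
Lemma Mlin_le_dist m t1 t2 : t2 <= t1 \/ t2 <= 0 -> (Mlin m r t1 <= Mlin m r t2)%N.
Proof.
move=> t12; apply/bigmax_leqP => C /asboolP[linC [locC distC]]; apply: card_le_Mlin => //.
apply/forall_inP => x xC; apply/forall_inP => y yC; apply/implyP => xy.
case: t12 => [t21 | t20]; last exact: le_trans t20 (ler0n _ _).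
exact: le_trans t21 (implyP (forall_inP (forall_inP distC x xC) y yC) xy).
Qed.

Lemma card_le_shorten n (C : {set word n}) t s :
  is_linear_code C -> has_locality C r -> min_dist_ge C t -> (s * r.+1 <= n)%N ->
  (#|C| <= 2 ^ (s * r) * Mlin (n - s * r.+1) r t)%N.
Proof.
move=> linC locC distC sn.
have [S [K [cardS cardK detKS]]] := exists_determining_set locC sn.
have cardSC : #|~: S| = (n - s * r.+1)%N by have := cardsC S; rewrite card_ord; lia.
pose restrictK (c : word n) := [ffun k : {j | j \in K} => c 0 (val k)].
apply: leq_trans (card_le_fibers (f := restrictK) (B := vanishing_subcode S C) _) _.
  move=> x y xC yC /ffunP xy; apply/vanishing_subcodeP; split; first exact: linear_codeB.
  move=> j jS; rewrite !mxE (detKS x y) ?subrr // => k kK.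
  by have := xy (exist _ k kK); rewrite !ffunE.
rewrite card_ffun card_Fp // card_sig -cardSC leq_mul ?card_vanishing_subcode_le_Mlin //.
by rewrite leq_pexp2l.
Qed.

Lemma Mlin_shorten n t s : (s * r.+1 <= n)%N ->
  (Mlin n r t <= 2 ^ (s * r) * Mlin (n - s * r.+1) r t)%N.
Proof.
move=> sn; apply/bigmax_leqP => C /asboolP[linC [locC distC]].
exact: card_le_shorten.
Qed.

End MaximalCodes.

Section LogBounds.
Variables (R : realType) (r : nat).

Lemma log2_Mlin_shorten n (t : R) s : (s * r.+1 <= n)%N ->
  log2 (Mlin n r t)%:R <= (s * r)%:R + log2 (Mlin (n - s * r.+1) r t)%:R :> R.
Proof.
move=> sn; rewrite -[(s * r)%:R]log2_pow2 -log2M ?exprn_gt0 ?ltr0n ?Mlin_gt0 // -natrX -natrM.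
by apply: ler_log2; rewrite ?ltr0n ?Mlin_gt0 ?ler_nat ?Mlin_shorten.
Qed.

Lemma code_dim_le_shorten n (C : {set word n}) (t : R) s :
  is_linear_code C -> has_locality C r -> min_dist_ge C t -> (s * r.+1 <= n)%N ->
  (code_dim C)%:R <= (s * r)%:R + log2 (Mlin (n - s * r.+1) r t)%:R :> R.
Proof.
move=> linC locC distC sn; apply: le_trans (log2_Mlin_shorten t sn).
rewrite -[(code_dim C)%:R]log2_pow2 -natrX -card_linear_code //; apply: ler_log2.
  by rewrite ltr0n; apply/card_gt0P; exists 0; exact: linear_code0.
by rewrite ler_nat card_le_Mlin.
Qed.

End LogBounds.

Lemma Rlin_ge0 (R : realType) r (delta : R) : (0 <= Rlin r delta)%E.
Proof.
apply: limf_esup_ge0 => [[N _ /(_ N (leqnn N))] // | n].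
by rewrite lee_fin divr_ge0 // log2_ge0 // ler1n Mlin_gt0.
Qed.

Section Rates.
Variables (R : realType) (r : nat) (sigma : R).
Hypotheses (sigma_ge0 : 0 <= sigma) (theta_gt0 : 0 < 1 - sigma * r.+1%:R).
Local Notation theta := (1 - sigma * r.+1%:R).

Lemma exists_shortening_length n N : N%:R + r.+1%:R < theta * n%:R ->
  exists s, [/\ (s * r.+1 <= n)%N, (N < n - s * r.+1)%N,
                (n - s * r.+1)%:R <= theta * n%:R & s%:R <= sigma * n%:R + 1].
Proof.
move=> Nn; set s := (Num.truncn (sigma * n%:R)).+1.
have s_gt : sigma * n%:R < s%:R := truncnS_gt _.
have s_le : s%:R <= sigma * n%:R + 1 by rewrite -natr1 lerD2r truncn_le mulr_ge0.
have sN : (s * r.+1 + N < n)%N.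
  rewrite -(ltr_nat R) natrD natrM.
  have := ler_wpM2r (ler0n R r.+1) s_le; nra.
exists s; split=> //; [lia | lia |].
rewrite natrB ?natrM; last lia.
have := ler_wpM2r (ler0n R r.+1) (ltW s_gt); nra.
Qed.

Lemma log2_Mlin_rate (delta l eps : R) N n : 0 <= l -> 0 < eps ->
  (forall m, (N <= m)%N -> log2 (Mlin m r (delta / theta * m%:R))%:R / m%:R < l + eps) ->
  N%:R + r.+1%:R < theta * n%:R -> r%:R < eps * n%:R ->
  log2 (Mlin n r (delta * n%:R))%:R / n%:R <= sigma * r%:R + theta * l + 2 * eps.
Proof.
move=> l0 eps0 rateN Nn rn.
have n0 : 0 < n%:R :> R.
  by rewrite -(pmulr_rgt0 _ theta_gt0); apply: le_lt_trans Nn; exact: addr_ge0.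
have [s [sn Nm mn s_le]] := exists_shortening_length Nn.
set m := (n - s * r.+1)%N in Nm mn.
have m0 : 0 < m%:R :> R by rewrite ltr0n; lia.
have dist_m : (Mlin m r (delta * n%:R) <= Mlin m r (delta / theta * m%:R))%N.
  apply: Mlin_le_dist; have [d0 | d0] := lerP 0 delta; [left | right].
    apply: le_trans (ler_wpM2l (divr_ge0 d0 (ltW theta_gt0)) mn) _.
    by rewrite mulrA divfK // gt_eqF.
  by rewrite mulr_le0_ge0 // mulr_le0_ge0 ?invr_ge0 ?ltW.
have short_n := log2_Mlin_shorten (delta * n%:R) sn.
have dist_log :
    log2 (Mlin m r (delta * n%:R))%:R <= log2 (Mlin m r (delta / theta * m%:R))%:R :> R.
  by apply: ler_log2; rewrite ?ltr0n ?Mlin_gt0 ?ler_nat.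
have := rateN m (ltnW Nm); rewrite ltr_pdivrMr // => rate_m.
rewrite ler_pdivrMr //; rewrite natrM in short_n.
have := ler_wpM2r (ler0n R r) s_le; have := ler_wpM2l (addr_ge0 l0 (ltW eps0)) mn.
have : theta * (eps * n%:R) <= eps * n%:R.
  apply: ler_piMl; first by rewrite mulr_ge0 // ltW.
  by have := mulr_ge0 sigma_ge0 (ler0n R r.+1); lra.
lra.
Qed.

Lemma Rlin_shorten delta :
  (Rlin r delta <= (sigma * r%:R)%:E + theta%:E * Rlin r (delta / theta))%E.
Proof.
have := Rlin_ge0 r (delta / theta).
case E: (Rlin r (delta / theta)) => [l | | ] // l0; last first.
  by rewrite gt0_muley ?lte_fin // addey // leey.
rewrite lee_fin in l0; rewrite -EFinM -EFinD; apply/lee_addgt0Pr => e e0.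
have eps0 : 0 < e / 2 by rewrite divr_gt0.
have /limn_esup_lt_eventually[N rateN] : (Rlin r (delta / theta) < (l + e / 2)%:E)%E.
  by rewrite E lte_fin ltrDl.
have [N1 N1n] := natr_gt_eventually (N%:R + r.+1%:R) theta_gt0.
have [N2 N2n] := natr_gt_eventually r%:R eps0.
apply: (limn_esup_le_eventually (N := maxn N1 N2)) => n; rewrite geq_max => /andP[n1 n2].
rewrite -EFinD lee_fin; apply: le_trans (log2_Mlin_rate l0 eps0 _ (N1n n n1) (N2n n n2)) _.
  by move=> m /rateN; rewrite lte_fin.
lra.
Qed.

End Rates.

Theorem theorem7 (R : realType) :
  (forall (n r d : nat) (C : {set 'rV['F_2]_n}),
     is_linear_code C -> has_locality C r -> min_dist_ge C (d%:R : R) ->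
     forall s : nat, (1 <= s)%N -> (s * r.+1 <= n)%N ->
       ((code_dim C)%:R : R) <= (s * r)%:R + log2 (Mlin (n - s * r.+1) r (d%:R : R))%:R)
  /\
  (forall (r : nat) (delta sigma : R),
     0 <= sigma -> sigma < 1 / (r.+1)%:R ->
     (Rlin r delta <= (sigma * r%:R)%:E
        + (1 - sigma * (r.+1)%:R)%:E * Rlin r (delta / (1 - sigma * (r.+1)%:R)))%E).
Proof.
split=> [n r d C linC locC distC s _ sn | r delta sigma sigma_ge0 sigma_lt].
  exact: code_dim_le_shorten.
apply: Rlin_shorten => //.
by rewrite subr_gt0 -ltr_pdivlMr ?ltr0n // mul1r.
Qed.
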